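(* Let $(X,\tau)$ be a topological space with an operation $\gamma$ on $\tau$ and $A\subseteq X$. Then (a) $sbd_{\gamma^{*}}(A)=sbd_{\gamma^{*}}(X-A)$; (b) if $\gamma$ is an open operation, then $scl_{\gamma^{*}}(scl_{\gamma^{*}}(A))=scl_{\gamma^{*}}(A)$.
   Context: An operation on $\tau$ is a map $\gamma:\tau\to P(X)$, $V\mapsto V^\gamma$, with $V\subseteq V^\gamma$ for every $V\in\tau$. For $A\subseteq X$, $int_\gamma(A)=\{x\in A: \text{there is an open } N \text{ with } x\in N,\ N^\gamma\subseteq A\}$; $A$ is $\gamma$-open iff $A=int_\gamma(A)$. $cl_\gamma(A)$ is the set of $x\in X$ such that $U^\gamma\cap A\neq\emptyset$ for every open $U\ni x$. $A$ is $\gamma^{*}$-semi-open if there is a $\gamma$-open set $O$ with $O\subseteq A\subseteq cl_\gamma(O)$; $A$ is $\gamma^{*}$-semi-closed if $X-A$ is $\gamma^{*}$-semi-open. $scl_{\gamma^{*}}(A)$ is the intersection of all $\gamma^{*}$-semi-closed sets containing $A$, and $sbd_{\gamma^{*}}(A)=scl_{\gamma^{*}}(A)\cap scl_{\gamma^{*}}(X-A)$. $\gamma$ is open if for every $x\in X$ and every open neighbourhood $U$ of $x$ there is a $\gamma$-open set $B$ with $x\in B$ and $U^\gamma\subseteq B$. *)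

From mathcomp Require Import all_boot all_classical all_reals.
From mathcomp Require Import topology.
Set Implicit Arguments. Unset Strict Implicit. Unset Printing Implicit Defensive.
Local Open Scope classical_set_scope.

Section GammaDefs.
Variable X : topologicalType.
(* An operation on tau: only its values on open sets matter. *)
Variable gamma : set X -> set X.

Definition is_operation : Prop := forall V : set X, open V -> V `<=` gamma V.

Definition int_g (A : set X) : set X :=
  [set x | A x /\ exists N : set X, [/\ open N, N x & gamma N `<=` A]].

Definition g_open (A : set X) : Prop := A = int_g A.

Definition cl_g (A : set X) : set X :=
  [set x | forall U : set X, open U -> U x -> gamma U `&` A !=set0].

Definition gs_semi_open (A : set X) : Prop :=
  exists O : set X, [/\ g_open O, O `<=` A & A `<=` cl_g O].

Definition gs_semi_closed (A : set X) : Prop := gs_semi_open (~` A).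

Definition scl_gs (A : set X) : set X :=
  \bigcap_(F in [set F | gs_semi_closed F /\ A `<=` F]) F.

Definition sbd_gs (A : set X) : set X := scl_gs A `&` scl_gs (~` A).

Definition open_operation : Prop :=
  forall (x : X) (U : set X), open U -> U x ->
    exists B : set X, [/\ g_open B, B x & gamma U `<=` B].
End GammaDefs.

From mathcomp Require Import all_boot all_classical all_reals.
From mathcomp Require Import topology.
Set Implicit Arguments. Unset Strict Implicit. Unset Printing Implicit Defensive.
Local Open Scope classical_set_scope.

(* Arbitrary unions of gamma-open sets are gamma-open and cl_g is monotone, so
   arbitrary unions of gamma*-semi-open sets are gamma*-semi-open; dually
   scl_gs A is itself gamma*-semi-closed, whence idempotent. *)

Section SemiClosure.
Variables (X : topologicalType) (gamma : set X -> set X).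

Lemma g_open_bigcup (I : Type) (D : set I) (F : I -> set X) :
  (forall i, D i -> g_open gamma (F i)) -> g_open gamma (\bigcup_(i in D) F i).
Proof.
move=> oF; apply/seteqP; split=> [x [i Di Fix]|x []//].
split; first by exists i.
have : int_g gamma (F i) x by rewrite -oF.
case=> _ [N [oN Nx gNF]]; exists N; split=> // y /gNF Fiy.
by exists i.
Qed.

Lemma cl_gS (A B : set X) : A `<=` B -> cl_g gamma A `<=` cl_g gamma B.
Proof.
move=> AB x clAx U oU Ux; have [y [gUy Ay]] := clAx U oU Ux.
by exists y; split=> //; apply: AB.
Qed.

Lemma gs_semi_open_bigcup (I : Type) (D : set I) (F : I -> set X) :
  (forall i, D i -> gs_semi_open gamma (F i)) ->
  gs_semi_open gamma (\bigcup_(i in D) F i).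
Proof.
move=> soF.
pose witnesses := [set P | g_open gamma P /\
  exists2 i, D i & P `<=` F i /\ F i `<=` cl_g gamma P].
exists (\bigcup_(P in witnesses) P); split.
- by apply: g_open_bigcup => P [].
- by move=> x [P [_ [i Di [PF _]]] Px]; exists i => //; apply: PF.
- move=> x [i Di Fix]; have [P [oP PF FclP]] := soF i Di.
  have wP : witnesses P by split=> //; exists i.
  by apply: (cl_gS (bigcup_sup wP)); apply: FclP.
Qed.

Lemma gs_semi_closed_bigcap (I : Type) (D : set I) (F : I -> set X) :
  (forall i, D i -> gs_semi_closed gamma (F i)) ->
  gs_semi_closed gamma (\bigcap_(i in D) F i).
Proof. by move=> scF; rewrite /gs_semi_closed setC_bigcap; exact: gs_semi_open_bigcup. Qed.

Lemma scl_gs_semi_closed (A : set X) : gs_semi_closed gamma (scl_gs gamma A).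
Proof. by apply: gs_semi_closed_bigcap => F []. Qed.

Lemma subset_scl_gs (A : set X) : A `<=` scl_gs gamma A.
Proof. by move=> x Ax F [_ AF]; apply: AF. Qed.

Lemma scl_gs_id (F : set X) : gs_semi_closed gamma F -> scl_gs gamma F = F.
Proof.
move=> scF; apply/seteqP; split; last exact: subset_scl_gs.
by move=> x; apply; split.
Qed.

Lemma sbd_gsC (A : set X) : sbd_gs gamma (~` A) = sbd_gs gamma A.
Proof. by rewrite /sbd_gs setCK setIC. Qed.

End SemiClosure.

Theorem proposition3p17 (X : topologicalType) (gamma : set X -> set X)
  (Hgamma : is_operation gamma) (A : set X) :
  sbd_gs gamma A = sbd_gs gamma (~` A) /\
  (open_operation gamma -> scl_gs gamma (scl_gs gamma A) = scl_gs gamma A).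
Proof.
split; first by rewrite sbd_gsC.
by move=> _; apply/scl_gs_id/scl_gs_semi_closed.
Qed.
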